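(* Let $\beta=1+\delta$ with $\delta=\delta(n)>0$ and $\delta^2n\to\infty$, and let $(S_t)$ be the normalized magnetization chain of the Glauber dynamics for the mean-field Ising model on $n$ vertices. Let $g(x)=\frac{\tanh(\beta x)-x}{1-x\tanh(\beta x)}$, $\zeta$ (the state nearest to) the unique positive root of $g$, $\tau_\zeta=\min\{t:S_t=\zeta\}$ and $t_{\mathrm{exp}}=\frac n\delta\exp\big(\frac n2\int_0^\zeta\log\frac{1+g(x)}{1-g(x)}dx\big)$. Then $\mathbb{E}_1\tau_\zeta=o(t_{\mathrm{exp}})$.
   Context: For $n\ge1$ and $\beta\ge0$, the mean-field Ising measure on $\{1,-1\}^n$ is $\mu_n(\sigma)\propto\exp\big(\frac{\beta}{n}\sum_{x<y}\sigma(x)\sigma(y)\big)$; the heat-bath Glauber dynamics chooses a uniform vertex and resamples its spin from $\mu_n$ conditioned on the other spins. The magnetization chain $S_t=\frac1n\sum_iX_t(i)$ is the birth-and-death chain on $\{-1,-1+\frac2n,\dots,1\}$ with $P(x,x+\frac2n)=\frac{1-x}{2}\cdot\frac{1+\tanh(\beta(x+1/n))}{2}$, $P(x,x-\frac2n)=\frac{1+x}{2}\cdot\frac{1-\tanh(\beta(x-1/n))}{2}$, remaining mass on $P(x,x)$. $\mathbb{E}_1$ denotes expectation for the chain started at $S_0=1$. *)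

From Stdlib Require Import Reals Lra Lia.
From Coquelicot Require Import Coquelicot.
Open Scope R_scope.

Definition tanh (x : R) : R := (exp x - exp (- x)) / (exp x + exp (- x)).

Definition gfun (beta x : R) : R :=
  (tanh (beta * x) - x) / (1 - x * tanh (beta * x)).

(* State of the magnetization chain with index k in {0..n}: x = -1 + 2k/n. *)
Definition st (n k : nat) : R := -1 + 2 * INR k / INR n.

Definition pup (beta : R) (n k : nat) : R :=
  let x := st n k in (1 - x) / 2 * ((1 + tanh (beta * (x + 1 / INR n))) / 2).
Definition pdown (beta : R) (n k : nat) : R :=
  let x := st n k in (1 + x) / 2 * ((1 - tanh (beta * (x - 1 / INR n))) / 2).
Definition pstay (beta : R) (n k : nat) : R := 1 - pup beta n k - pdown beta n k.

(* killed[beta,n,kz] t k = P_1(S_t = st n k and S_s <> st n kz for all s <= t),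
   the chain started at S_0 = 1 (index n). *)
Fixpoint killed (beta : R) (n kz : nat) (t k : nat) : R :=
  match t with
  | O => if Nat.eqb k n then (if Nat.eqb k kz then 0 else 1) else 0
  | S t' =>
      if Nat.eqb k kz then 0 else
      if Nat.leb k n then
        (match k with
         | O => 0
         | S k' => killed beta n kz t' k' * pup beta n k'
         end)
        + killed beta n kz t' k * pstay beta n k
        + (if Nat.leb (S k) n then killed beta n kz t' (S k) * pdown beta n (S k) else 0)
      else 0
  end.

(* P_1(tau_zeta > t), with tau_zeta = min { t >= 0 : S_t = st n kz } *)
Definition surv (beta : R) (n kz : nat) (t : nat) : R :=
  sum_f_R0 (fun k => killed beta n kz t k) n.

(* E_1 tau_zeta = sum_{t >= 0} P_1(tau_zeta > t)  (as a series) *)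
Definition Etau (beta : R) (n kz : nat) : R := Series (surv beta n kz).

Definition texp (delta : R) (n : nat) (zeta : R) : R :=
  INR n / delta *
  exp (INR n / 2 * RInt (fun x => ln ((1 + gfun (1 + delta) x) / (1 - gfun (1 + delta) x))) 0 zeta).

(* Any function V that is nonnegative on the states above the target and decreases by at least 1
   in expectation at each step of the chain killed at the target bounds E_1 tau by V(1).  At
   distance u above the fixed point z the magnetization drifts down by at least
   u (kappa + beta z u) / 4, where kappa = 1 - beta (1 - z^2) is comparable to z^2.  So V is a
   multiple of ln (w / (w + kappa / (beta z))) with w = u + c, shifted by the fluctuation scale
   c ~ (n kappa)^(-1/2) below which the variance of the steps, rather than the drift, pushes the
   chain down.  This gives E_1 tau = O(n / (beta z c)), while t_exp >= (n / delta) exp (n z^4 / 12),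
   and the ratio is O(1 / (n z^4)), where n z^4 tends to infinity with delta^2 n. *)

From Pilot Require Import Defs.
From Stdlib Require Import Reals Lra Lia Psatz.
From Coquelicot Require Import Coquelicot.
(* Stdlib's Reals has its own [tanh]; re-importing Defs makes [tanh] denote the one of Defs. *)
Import Pilot.Defs.
Open Scope R_scope.

Lemma exp_le_compat x y : x <= y -> exp x <= exp y.
Proof. intros [H|H]; [left; apply exp_increasing; exact H|subst; lra]. Qed.

Lemma exp_mult_INR n y : exp (INR n * y) = exp y ^ n.
Proof.
  induction n as [|n IH]; [simpl; rewrite Rmult_0_l; apply exp_0|].
  rewrite S_INR, Rmult_plus_distr_r, Rmult_1_l, exp_plus, IH, <- tech_pow_Rmult; ring.
Qed.

Lemma pow_div_le_exp k x : 0 <= x -> (x / INR (S k)) ^ S k <= exp x.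
Proof.
  intros Hx. set (y := x / INR (S k)).
  assert (Hk : 0 < INR (S k)) by (apply lt_0_INR; lia).
  assert (Hy : 0 <= y) by (apply Rdiv_le_0_compat; lra).
  replace (exp x) with (exp (INR (S k) * y)) by (unfold y; f_equal; field; lra).
  rewrite exp_mult_INR. apply pow_incr. pose proof (exp_ineq1_le y). lra.
Qed.

Lemma le_of_derive_nonneg (f df : R -> R) (b : R) : 0 <= b ->
  (forall x, 0 <= x <= b -> is_derive f x (df x)) ->
  (forall x, 0 <= x <= b -> 0 <= df x) -> f 0 <= f b.
Proof.
  intros Hb Hd Hp.
  destruct (MVT_gen f 0 b df) as [c [Hc Heq]];
    rewrite ?Rmin_left, ?Rmax_right in * by lra.
  - intros x Hx. apply Hd. lra.
  - intros x Hx. apply continuity_pt_filterlim, (@ex_derive_continuous R_AbsRing R_NormedModule).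
    eexists. apply Hd. lra.
  - pose proof (Rmult_le_pos _ (b - 0) (Hp c ltac:(lra)) ltac:(lra)). lra.
Qed.

(** * Hyperbolic tangent *)

Lemma tanh_exp2 y : tanh y = (exp (2 * y) - 1) / (exp (2 * y) + 1).
Proof.
  unfold tanh. replace (2 * y) with (y + y) by ring. rewrite exp_plus, exp_Ropp.
  pose proof (exp_pos y). field. nra.
Qed.

Lemma tanh_bounds y : -1 < tanh y < 1.
Proof.
  rewrite tanh_exp2. pose proof (exp_pos (2 * y)) as HE. set (E := exp (2 * y)) in *.
  split; apply Rmult_lt_reg_r with (E + 1); try lra;
    unfold Rdiv; rewrite Rmult_assoc, Rinv_l; lra.
Qed.

Lemma tanh_0 : tanh 0 = 0.
Proof. rewrite tanh_exp2, Rmult_0_r, exp_0. field. Qed.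

Lemma tanh_nonneg y : 0 <= y -> 0 <= tanh y.
Proof.
  intros Hy. rewrite tanh_exp2.
  assert (1 <= exp (2 * y)) by (rewrite <- exp_0; apply exp_le_compat; lra).
  apply Rdiv_le_0_compat; lra.
Qed.

Lemma tanh_le_compat x y : x <= y -> tanh x <= tanh y.
Proof.
  intros H. rewrite !tanh_exp2.
  assert (exp (2 * x) <= exp (2 * y)) by (apply exp_le_compat; lra).
  pose proof (exp_pos (2 * x)). set (E := exp (2 * x)) in *. set (F := exp (2 * y)) in *.
  apply Rmult_le_reg_r with ((E + 1) * (F + 1)); [nra|].
  replace ((E - 1) / (E + 1) * ((E + 1) * (F + 1))) with ((E - 1) * (F + 1)) by (field; lra).
  replace ((F - 1) / (F + 1) * ((E + 1) * (F + 1))) with ((F - 1) * (E + 1)) by (field; lra).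
  nra.
Qed.

Lemma tanh_opp y : tanh (- y) = - tanh y.
Proof.
  unfold tanh. rewrite Ropp_involutive.
  pose proof (exp_pos y). pose proof (exp_pos (- y)). field. lra.
Qed.

Lemma tanh_plus a b : tanh (a + b) = (tanh a + tanh b) / (1 + tanh a * tanh b).
Proof.
  rewrite !tanh_exp2. replace (2 * (a + b)) with (2 * a + 2 * b) by ring. rewrite exp_plus.
  pose proof (exp_pos (2 * a)). pose proof (exp_pos (2 * b)).
  set (A := exp (2 * a)) in *. set (B := exp (2 * b)) in *.
  field. repeat split; nra.
Qed.

Lemma tanh_ratio y : (1 + tanh y) / (1 - tanh y) = exp (2 * y).
Proof. rewrite tanh_exp2. pose proof (exp_pos (2 * y)). field. lra. Qed.

Lemma tanh_midpoint_le y e : 0 <= y -> tanh (y + e) + tanh (y - e) <= 2 * tanh y.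
Proof.
  intros Hy. unfold Rminus. rewrite !tanh_plus, tanh_opp.
  pose proof (tanh_nonneg y Hy). pose proof (tanh_bounds y). pose proof (tanh_bounds e).
  set (t := tanh y) in *. set (s := tanh e) in *.
  assert (0 < 1 + t * s) by nra. assert (0 < 1 + t * - s) by nra.
  replace ((t + s) / (1 + t * s) + (t + - s) / (1 + t * - s))
    with (2 * t * (1 - s * s) / ((1 + t * s) * (1 - t * s))) by (field; lra).
  apply Rmult_le_reg_r with ((1 + t * s) * (1 - t * s)); [nra|].
  replace (2 * t * (1 - s * s) / ((1 + t * s) * (1 - t * s)) * ((1 + t * s) * (1 - t * s)))
    with (2 * t * (1 - s * s)) by (field; lra).
  assert (0 <= t * (s * s) * (1 - t * t)) by (apply Rmult_le_pos; [apply Rmult_le_pos|]; nra).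
  nra.
Qed.

Lemma exp_m2_le_1_minus_tanh y : 0 <= y -> exp (-2 * y) <= 1 - tanh y.
Proof.
  intros Hy. rewrite tanh_exp2. replace (-2 * y) with (- (2 * y)) by ring. rewrite exp_Ropp.
  assert (1 <= exp (2 * y)) by (rewrite <- exp_0; apply exp_le_compat; lra).
  set (E := exp (2 * y)) in *.
  replace (1 - (E - 1) / (E + 1)) with (2 / (E + 1)) by (field; lra).
  apply Rmult_le_reg_r with (E * (E + 1)); [nra|].
  replace (/ E * (E * (E + 1))) with (E + 1) by (field; lra).
  replace (2 / (E + 1) * (E * (E + 1))) with (2 * E) by (field; lra). lra.
Qed.

Lemma tanh_derive y : is_derive tanh y (1 - tanh y ^ 2).
Proof.
  unfold tanh. pose proof (exp_pos y). pose proof (exp_pos (- y)).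
  auto_derive; [lra|]. field. lra.
Qed.

Lemma tanh_le_id y : 0 <= y -> tanh y <= y.
Proof.
  intros Hy.
  enough (H : 0 - tanh 0 <= y - tanh y) by (rewrite tanh_0 in H; lra).
  apply (le_of_derive_nonneg (fun z => z - tanh z) (fun z => tanh z ^ 2));
    [lra| |intros; apply pow2_ge_0].
  intros x _. replace (tanh x ^ 2) with (1 - (1 - tanh x ^ 2)) by ring.
  apply @is_derive_minus; [apply @is_derive_id | apply tanh_derive].
Qed.

Lemma ln_1_plus_le y : -1 < y -> ln (1 + y) <= y.
Proof. intros H. rewrite <- (ln_exp y) at 2. apply ln_le; [lra|apply exp_ineq1_le]. Qed.

Lemma ln_1_plus_ge y : 0 <= y -> y - y ^ 2 / 2 <= ln (1 + y).
Proof.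
  intros Hy.
  assert (H : (fun z => ln (1 + z) - z + z ^ 2 / 2) 0 <= (fun z => ln (1 + z) - z + z ^ 2 / 2) y).
  { apply (le_of_derive_nonneg (fun z => ln (1 + z) - z + z ^ 2 / 2) (fun z => z ^ 2 / (1 + z)));
      [lra| |].
    - intros x Hx. auto_derive; [lra|]. field. lra.
    - intros x Hx. apply Rdiv_le_0_compat; nra. }
  simpl in H. rewrite Rplus_0_r, ln_1 in H. lra.
Qed.

Lemma ln_1_minus_le y : 0 <= y < 1 -> ln (1 - y) <= - y - y ^ 2 / 2.
Proof.
  intros Hy.
  assert (H : (fun z => - z - z ^ 2 / 2 - ln (1 - z)) 0 <= (fun z => - z - z ^ 2 / 2 - ln (1 - z)) y).
  { apply (le_of_derive_nonneg (fun z => - z - z ^ 2 / 2 - ln (1 - z)) (fun z => z ^ 2 / (1 - z)));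
      [lra| |].
    - intros x Hx. auto_derive; [lra|]. field. lra.
    - intros x Hx. apply Rdiv_le_0_compat; nra. }
  simpl in H. rewrite Rminus_0_r, ln_1 in H. lra.
Qed.

Lemma ln_1_minus_ge y : 0 <= y <= 1 / 2 -> - y - y ^ 2 <= ln (1 - y).
Proof.
  intros Hy.
  assert (H : (fun z => ln (1 - z) + z + z ^ 2) 0 <= (fun z => ln (1 - z) + z + z ^ 2) y).
  { apply (le_of_derive_nonneg (fun z => ln (1 - z) + z + z ^ 2) (fun z => z * (1 - 2 * z) / (1 - z)));
      [lra| |].
    - intros x Hx. auto_derive; [lra|]. field. lra.
    - intros x Hx. apply Rdiv_le_0_compat; nra. }
  simpl in H. rewrite Rminus_0_r, ln_1 in H. lra.
Qed.

Lemma ln_ratio_le z : 0 <= z < 1 ->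
  ln (1 + z) - ln (1 - z) <= 2 * z + 2 * z ^ 3 / (3 * (1 - z ^ 2)).
Proof.
  intros Hz.
  set (F := fun z => 2 * z + 2 * z ^ 3 / (3 * (1 - z ^ 2)) - (ln (1 + z) - ln (1 - z))).
  assert (H : F 0 <= F z).
  { apply (le_of_derive_nonneg F (fun z => (4 * z ^ 4 / 3) / (1 - z ^ 2) ^ 2)); [lra| |].
    - intros x Hx. unfold F. auto_derive; [repeat split; try lra; nra|].
      field. repeat split; try lra; nra.
    - intros x Hx. apply Rdiv_le_0_compat; [nra|apply pow_lt; nra]. }
  unfold F in H. rewrite !Rplus_0_r, Rminus_0_r, ln_1 in H.
  replace (2 * 0 + 2 * 0 ^ 3 / (3 * (1 - 0 ^ 2)) - (0 - 0)) with 0 in H by (simpl; field). lra.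
Qed.

Lemma ln_ratio_half_le z : 0 <= z < 1 ->
  (ln (1 + z) - ln (1 - z)) / 2 + 2 * z ^ 3 / 3 <= z / (1 - z ^ 2).
Proof.
  intros Hz.
  set (F := fun z => z / (1 - z ^ 2) - (ln (1 + z) - ln (1 - z)) / 2 - 2 * z ^ 3 / 3).
  assert (H : F 0 <= F z).
  { apply (le_of_derive_nonneg F (fun z => 2 * z ^ 2 * (1 - (1 - z ^ 2) ^ 2) / (1 - z ^ 2) ^ 2));
      [lra| |].
    - intros x Hx. unfold F. auto_derive; [repeat split; try lra; nra|].
      field. repeat split; try lra; nra.
    - intros x Hx. apply Rdiv_le_0_compat; [|apply pow_lt; nra].
      assert (0 <= x ^ 2 <= 1) by (split; nra).
      assert (0 <= (1 - x ^ 2) ^ 2 <= 1) by (split; nra). apply Rmult_le_pos; nra. }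
  unfold F in H. rewrite !Rplus_0_r, Rminus_0_r, ln_1 in H.
  replace (0 / (1 - 0 ^ 2) - (0 - 0) / 2 - 2 * 0 ^ 3 / 3) with 0 in H by (simpl; field). lra.
Qed.

Lemma quartic_le_ln_mix z : 0 <= z < 1 ->
  z ^ 4 / 6 <= - (1 + z / 2) * ln (1 + z) - (1 - z / 2) * ln (1 - z).
Proof.
  intros Hz.
  set (F := fun z => - (1 + z / 2) * ln (1 + z) - (1 - z / 2) * ln (1 - z) - z ^ 4 / 6).
  assert (H : F 0 <= F z).
  { apply (le_of_derive_nonneg F
      (fun z => z / (1 - z ^ 2) - (ln (1 + z) - ln (1 - z)) / 2 - 2 * z ^ 3 / 3)); [lra| |].
    - intros x Hx. unfold F. auto_derive; [repeat split; try lra; nra|].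
      unfold Rminus. field. split; nra.
    - intros x Hx. pose proof (ln_ratio_half_le x ltac:(lra)). lra. }
  unfold F in H. rewrite !Rplus_0_r, Rminus_0_r, ln_1 in H.
  replace (- (1 + 0 / 2) * 0 - (1 - 0 / 2) * 0 - 0 ^ 4 / 6) with 0 in H by (simpl; field). lra.
Qed.

(** * The killed chain and a Foster--Lyapunov bound *)

Lemma st_S n k : (1 <= n)%nat -> st n (S k) = st n k + 2 / INR n.
Proof. intros. unfold st. rewrite S_INR. field. apply not_0_INR. lia. Qed.

Lemma st_n n : (1 <= n)%nat -> st n n = 1.
Proof. intros. unfold st. assert (0 < INR n) by (apply lt_0_INR; lia). field_simplify; lra. Qed.

Lemma st_le_compat n j k : (1 <= n)%nat -> (j <= k)%nat -> st n j <= st n k.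
Proof.
  intros Hn Hjk. unfold st. assert (0 < INR n) by (apply lt_0_INR; lia).
  assert (INR j <= INR k) by (apply le_INR; lia).
  assert (2 * INR j / INR n <= 2 * INR k / INR n)
    by (unfold Rdiv; apply Rmult_le_compat_r; [apply Rlt_le, Rinv_0_lt_compat|]; lra).
  lra.
Qed.

Lemma st_range n k : (1 <= n)%nat -> (k <= n)%nat -> -1 <= st n k <= 1.
Proof.
  intros Hn Hk. rewrite <- (st_n n Hn).
  replace (-1) with (st n 0) by (unfold st; simpl; lra).
  split; apply st_le_compat; lia.
Qed.

Lemma pup_n beta n : (1 <= n)%nat -> pup beta n n = 0.
Proof. intros. unfold pup. cbv zeta. rewrite st_n by auto. lra. Qed.

Lemma transition_probs_nonneg beta n k : (1 <= n)%nat -> (k <= n)%nat ->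
  0 <= pup beta n k /\ 0 <= pdown beta n k /\ 0 <= pstay beta n k.
Proof.
  intros Hn Hk. unfold pstay, pup, pdown. cbv zeta.
  destruct (st_range n k Hn Hk).
  pose proof (tanh_bounds (beta * (st n k + 1 / INR n))).
  pose proof (tanh_bounds (beta * (st n k - 1 / INR n))).
  set (x := st n k) in *.
  set (T1 := tanh (beta * (x + 1 / INR n))) in *.
  set (T2 := tanh (beta * (x - 1 / INR n))) in *.
  repeat split; nra.
Qed.

Section Killed.

Variables (beta : R) (n kz : nat).
Hypothesis Hn : (1 <= n)%nat.

Lemma killed_gt t k : (n < k)%nat -> killed beta n kz t k = 0.
Proof.
  intros H. destruct t; simpl.
  - destruct (Nat.eqb_spec k n); [lia|reflexivity].
  - destruct (Nat.eqb k kz); [reflexivity|]. destruct (Nat.leb_spec k n); [lia|reflexivity].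
Qed.

Lemma killed_kz t : killed beta n kz t kz = 0.
Proof.
  destruct t; simpl; rewrite Nat.eqb_refl; [destruct (Nat.eqb kz n)|]; reflexivity.
Qed.

Definition inflow t k :=
  (match k with O => 0 | S k' => killed beta n kz t k' * pup beta n k' end)
  + killed beta n kz t k * pstay beta n k + killed beta n kz t (S k) * pdown beta n (S k).

Lemma killed_succ t k : (k <= n)%nat -> k <> kz -> killed beta n kz (S t) k = inflow t k.
Proof.
  intros Hk Hne. unfold inflow. cbn [killed].
  destruct (Nat.eqb_spec k kz); [lia|]. destruct (Nat.leb_spec k n); [|lia].
  destruct (Nat.leb_spec (S k) n); [reflexivity|].
  rewrite (killed_gt t (S k)) by lia. ring.
Qed.

Lemma killed_below t k : (kz <= n)%nat -> (k < kz)%nat -> killed beta n kz t k = 0.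
Proof.
  intros Hkz. revert k. induction t as [|t IH]; intros k Hk.
  - simpl. destruct (Nat.eqb_spec k n); [lia|reflexivity].
  - rewrite killed_succ by lia. unfold inflow. rewrite (IH k) by lia.
    assert (E1 : match k with O => 0 | S k' => killed beta n kz t k' * pup beta n k' end = 0)
      by (destruct k; [|rewrite IH by lia]; ring).
    assert (E2 : killed beta n kz t (S k) = 0)
      by (destruct (Nat.eq_dec (S k) kz) as [E|]; [rewrite E; apply killed_kz|apply IH; lia]).
    rewrite E1, E2. ring.
Qed.

Lemma inflow_nonneg t k : (k <= n)%nat -> (forall j, 0 <= killed beta n kz t j) ->
  0 <= inflow t k.
Proof.
  intros Hk Ht. unfold inflow.
  destruct (transition_probs_nonneg beta n k Hn Hk) as [_ [_ Hs]].
  assert (0 <= match k with O => 0 | S k' => killed beta n kz t k' * pup beta n k' end).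
  { destruct k as [|k]; [lra|].
    destruct (transition_probs_nonneg beta n k Hn ltac:(lia)) as [Hp _].
    apply Rmult_le_pos; auto. }
  pose proof (Rmult_le_pos _ _ (Ht k) Hs).
  destruct (Nat.le_gt_cases (S k) n) as [HS|HS]; [|rewrite (killed_gt t (S k)) by lia; lra].
  destruct (transition_probs_nonneg beta n (S k) Hn HS) as [_ [Hq _]].
  pose proof (Rmult_le_pos _ _ (Ht (S k)) Hq). lra.
Qed.

Lemma killed_nonneg t k : 0 <= killed beta n kz t k.
Proof.
  revert k. induction t as [|t IH]; intros k.
  - simpl. destruct (Nat.eqb k n); [destruct (Nat.eqb k kz)|]; lra.
  - destruct (Nat.le_gt_cases k n) as [Hk|Hk]; [|rewrite killed_gt by lia; lra].
    destruct (Nat.eq_dec k kz) as [->|Hne]; [rewrite killed_kz; lra|].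
    rewrite killed_succ by auto. apply inflow_nonneg; auto.
Qed.

Lemma surv_nonneg t : 0 <= surv beta n kz t.
Proof. apply cond_pos_sum. intros. apply killed_nonneg. Qed.

Definition step_mean (V : nat -> R) k :=
  pup beta n k * V (S k) + pstay beta n k * V k + pdown beta n k * V (pred k).

Definition killed_mean (V : nat -> R) t := sum_f_R0 (fun k => killed beta n kz t k * V k) n.

(* Summation by parts, exchanging "mass into k" with "mass out of k". *)
Lemma sum_inflow_exchange (al be ga V : nat -> R) N :
  sum_f_R0 (fun k => V k * ((match k with O => 0 | S k' => al k' end) + be k + ga (S k))) N =
  sum_f_R0 (fun k => al k * V (S k) + be k * V k + ga k * V (pred k)) N
  - al N * V (S N) + ga (S N) * V N - ga O * V O.
Proof. induction N as [|N IH]; simpl; [|rewrite IH; simpl]; ring. Qed.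

Variable V : nat -> R.
Hypothesis Hkz : (kz <= n)%nat.
Hypothesis HV_nonneg : forall k, (kz <= k <= n)%nat -> 0 <= V k.
Hypothesis HV_super : forall k, (kz < k <= n)%nat -> step_mean V k <= V k - 1.

Lemma killed_mean_succ_le t :
  killed_mean V (S t) <= sum_f_R0 (fun k => killed beta n kz t k * step_mean V k) n.
Proof.
  unfold killed_mean.
  apply Rle_trans with (sum_f_R0 (fun k => V k * inflow t k) n).
  - apply sum_Rle. intros k Hk. destruct (Nat.eq_dec k kz) as [->|Hne].
    + rewrite killed_kz, Rmult_0_l.
      apply Rmult_le_pos; [apply HV_nonneg; lia|apply inflow_nonneg; auto using killed_nonneg].
    + rewrite killed_succ by auto. lra.
  - set (a := killed beta n kz t).
    set (al := fun j => a j * pup beta n j).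
    set (be := fun j => a j * pstay beta n j).
    set (ga := fun j => a j * pdown beta n j).
    rewrite (sum_eq _ (fun k => V k * ((match k with O => 0 | S k' => al k' end) + be k + ga (S k))))
      by (intros [|k] _; reflexivity).
    rewrite sum_inflow_exchange. unfold al, be, ga.
    assert (HaS : a (S n) = 0) by (apply killed_gt; lia).
    assert (Ha0 : a O = 0).
    { unfold a. destruct (Nat.eq_dec kz O) as [E|];
        [rewrite <- E; apply killed_kz|apply killed_below; lia]. }
    rewrite pup_n, HaS, Ha0 by auto.
    replace (sum_f_R0 (fun k => a k * step_mean V k) n) with
      (sum_f_R0 (fun k => a k * pup beta n k * V (S k) + a k * pstay beta n k * V k
                          + a k * pdown beta n k * V (pred k)) n).
    + lra.
    + apply sum_eq. intros. unfold step_mean. ring.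
Qed.

Lemma killed_mean_step t : killed_mean V (S t) + surv beta n kz t <= killed_mean V t.
Proof.
  enough (sum_f_R0 (fun k => killed beta n kz t k * step_mean V k) n
          <= killed_mean V t - surv beta n kz t) by (pose proof (killed_mean_succ_le t); lra).
  unfold killed_mean, surv. rewrite <- minus_sum.
  apply sum_Rle. intros k Hk.
  destruct (Nat.le_gt_cases k kz) as [Hle|Hgt].
  - assert (killed beta n kz t k = 0) as ->; [|lra].
    destruct (Nat.eq_dec k kz) as [->|]; [apply killed_kz|apply killed_below; lia].
  - pose proof (Rmult_le_compat_l _ _ _ (killed_nonneg t k) (HV_super k ltac:(lia))). lra.
Qed.

Lemma killed_mean_nonneg t : 0 <= killed_mean V t.
Proof.
  apply cond_pos_sum. intros k.
  destruct (Nat.le_gt_cases k n) as [Hk|Hk]; [|rewrite killed_gt by lia; lra].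
  destruct (Nat.le_gt_cases kz k) as [Hk'|Hk']; [|rewrite killed_below by lia; lra].
  apply Rmult_le_pos; [apply killed_nonneg|apply HV_nonneg; lia].
Qed.

Lemma killed_mean_0_le : killed_mean V 0 <= V n.
Proof.
  assert (Hsingle : sum_f_R0 (fun k => if Nat.eqb k n then V n else 0) n = V n).
  { destruct n as [|m]; [lia|]. rewrite tech5, Nat.eqb_refl, sum_eq_R0; [ring|].
    intros k Hk. destruct (Nat.eqb_spec k (S m)); [lia|reflexivity]. }
  rewrite <- Hsingle. apply sum_Rle. intros k Hk. simpl.
  destruct (Nat.eqb_spec k n) as [->|]; [|lra].
  pose proof (HV_nonneg n ltac:(lia)). destruct (Nat.eqb n kz); lra.
Qed.

Lemma sum_surv_le T : sum_f_R0 (surv beta n kz) T <= V n.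
Proof.
  enough (killed_mean V (S T) + sum_f_R0 (surv beta n kz) T <= killed_mean V 0)
    by (pose proof (killed_mean_nonneg (S T)); pose proof killed_mean_0_le; lra).
  induction T as [|T IH]; simpl; [apply killed_mean_step|].
  pose proof (killed_mean_step (S T)). lra.
Qed.

Theorem Etau_le_lyapunov : ex_series (surv beta n kz) /\ 0 <= Etau beta n kz <= V n.
Proof.
  assert (Hincr : forall N, sum_n (surv beta n kz) N <= sum_n (surv beta n kz) (S N)).
  { intros N. rewrite !sum_n_Reals. simpl. pose proof (surv_nonneg (S N)). lra. }
  assert (Hbnd : forall N, sum_n (surv beta n kz) N <= V n)
    by (intros N; rewrite sum_n_Reals; apply sum_surv_le).
  destruct (ex_finite_lim_seq_incr _ (V n) Hincr Hbnd) as [l Hl].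
  assert (Hs : is_series (surv beta n kz) l) by exact Hl.
  split; [exists l; exact Hs|].
  unfold Etau. rewrite (is_series_unique _ _ Hs). split.
  - apply (is_lim_seq_le (fun _ => 0) (sum_n (surv beta n kz)) 0 l); [|apply is_lim_seq_const|exact Hl].
    intros N. rewrite sum_n_Reals. apply cond_pos_sum. intros. apply surv_nonneg.
  - apply (is_lim_seq_le (sum_n (surv beta n kz)) (fun _ => V n) l (V n));
      [exact Hbnd|exact Hl|apply is_lim_seq_const].
Qed.

End Killed.

(** * The fixed point [z = tanh (beta z)] and the drift towards it *)

Lemma gfun_root_tanh beta z : 0 < z < 1 -> gfun beta z = 0 -> tanh (beta * z) = z.
Proof.
  intros Hz Hg. unfold gfun in Hg. pose proof (tanh_bounds (beta * z)).
  assert (0 < 1 - z * tanh (beta * z)) by nra.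
  apply Rmult_integral in Hg as [Hg|Hg]; [lra|].
  exfalso. revert Hg. apply Rinv_neq_0_compat. lra.
Qed.

Section FixedPoint.

Variables (beta z : R).
Hypothesis Hz : 0 < z < 1.
Hypothesis Hfix : tanh (beta * z) = z.

Lemma exp_2_fixed_point : exp (2 * (beta * z)) = (1 + z) / (1 - z).
Proof. rewrite <- tanh_ratio, Hfix. reflexivity. Qed.

Lemma fixed_point_ln : 2 * (beta * z) = ln (1 + z) - ln (1 - z).
Proof.
  rewrite <- (ln_exp (2 * (beta * z))), exp_2_fixed_point.
  unfold Rdiv. rewrite ln_mult, ln_Rinv by (try apply Rinv_0_lt_compat; lra). ring.
Qed.

Lemma fixed_point_le : beta * z <= z + z ^ 3 / (3 * (1 - z ^ 2)).
Proof. pose proof fixed_point_ln. pose proof (ln_ratio_le z ltac:(lra)). lra. Qed.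

(* [1 - beta (1 - z^2)] is the slope of [x - tanh (beta x)] at the fixed point. *)
Lemma fixed_point_slope_bounds : 1 <= beta ->
  2 * z ^ 2 / 3 <= 1 - beta * (1 - z ^ 2) <= z ^ 2 /\ beta - 1 <= z ^ 2 / (3 * (1 - z ^ 2)).
Proof.
  intros Hb. pose proof fixed_point_le as H.
  assert (0 < 1 - z ^ 2) by nra.
  assert (Hb2 : beta <= 1 + z ^ 2 / (3 * (1 - z ^ 2))).
  { apply Rmult_le_reg_r with z; [lra|].
    replace ((1 + z ^ 2 / (3 * (1 - z ^ 2))) * z) with (z + z ^ 3 / (3 * (1 - z ^ 2)))
      by (field; lra). lra. }
  split; [split|lra].
  - assert (beta * (1 - z ^ 2) <= (1 + z ^ 2 / (3 * (1 - z ^ 2))) * (1 - z ^ 2))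
      by (apply Rmult_le_compat_r; lra).
    replace ((1 + z ^ 2 / (3 * (1 - z ^ 2))) * (1 - z ^ 2)) with (1 - 2 * z ^ 2 / 3) in *
      by (field; lra).
    lra.
  - nra.
Qed.

Lemma drift_above_fixed_point u : 1 <= beta -> 0 <= u -> z + u <= 1 ->
  u * ((1 - beta * (1 - z ^ 2)) + beta * z * u) / 2 <= (z + u) - tanh (beta * (z + u)).
Proof.
  intros Hb Hu Hx.
  destruct (fixed_point_slope_bounds Hb) as [[Hk _] _].
  replace (beta * (z + u)) with (beta * z + beta * u) by ring. rewrite tanh_plus, Hfix.
  pose proof (tanh_nonneg (beta * u) ltac:(nra)). pose proof (tanh_le_id (beta * u) ltac:(nra)).
  pose proof (tanh_bounds (beta * u)).
  set (s := tanh (beta * u)) in *.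
  assert (Hden : 0 < 1 + z * s) by nra.
  replace (z + u - (z + s) / (1 + z * s)) with ((u - s * (1 - z ^ 2 - z * u)) / (1 + z * s))
    by (field; lra).
  assert (Hnum : u * ((1 - beta * (1 - z ^ 2)) + beta * z * u) <= u - s * (1 - z ^ 2 - z * u)).
  { assert (0 <= 1 - z ^ 2 - z * u) by nra.
    assert (s * (1 - z ^ 2 - z * u) <= beta * u * (1 - z ^ 2 - z * u))
      by (apply Rmult_le_compat_r; lra).
    nra. }
  assert (0 <= u * ((1 - beta * (1 - z ^ 2)) + beta * z * u)) by (apply Rmult_le_pos; nra).
  apply Rle_trans with ((u - s * (1 - z ^ 2 - z * u)) / 2); [lra|].
  apply Rmult_le_reg_r with (2 * (1 + z * s)); [nra|].
  replace ((u - s * (1 - z ^ 2 - z * u)) / (1 + z * s) * (2 * (1 + z * s)))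
    with (2 * (u - s * (1 - z ^ 2 - z * u))) by (field; lra).
  replace ((u - s * (1 - z ^ 2 - z * u)) / 2 * (2 * (1 + z * s)))
    with ((u - s * (1 - z ^ 2 - z * u)) * (1 + z * s)) by field.
  assert (z * s <= 1) by nra. nra.
Qed.

End FixedPoint.

Definition nearest_state n kz z :=
  forall j, (j <= n)%nat -> Rabs (st n kz - z) <= Rabs (st n j - z).

Section Nearest.

Variables (n kz : nat) (z : R).
Hypothesis Hn : (1 <= n)%nat.
Hypothesis Hnear : nearest_state n kz z.

Lemma nearest_state_above k : (kz < k <= n)%nat -> 1 / INR n <= st n k - z.
Proof.
  intros Hk. assert (0 < INR n) by (apply lt_0_INR; lia).
  assert (Hd : st n kz + 2 / INR n <= st n k) by (rewrite <- st_S by auto; apply st_le_compat; lia).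
  pose proof (Hnear k ltac:(lia)).
  replace (2 / INR n) with (2 * (1 / INR n)) in Hd by (field; lra).
  assert (0 < 1 / INR n) by (apply Rdiv_lt_0_compat; lra).
  unfold Rabs in *. repeat destruct (Rcase_abs _); lra.
Qed.

Hypothesis Hkz : (kz < n)%nat.

Lemma nearest_state_below : - (1 / INR n) <= st n kz - z.
Proof.
  pose proof (Hnear (S kz) ltac:(lia)) as Hj. rewrite st_S in Hj by auto.
  assert (0 < INR n) by (apply lt_0_INR; lia).
  assert (0 < 1 / INR n) by (apply Rdiv_lt_0_compat; lra).
  replace (2 / INR n) with (2 * (1 / INR n)) in Hj by (field; lra).
  unfold Rabs in *. repeat destruct (Rcase_abs _); lra.
Qed.

Lemma nearest_state_1_minus : z < 1 -> 1 / INR n <= 1 - z.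
Proof.
  intros Hz1. pose proof (Hnear n (le_n n)) as H. rewrite st_n in H by auto.
  assert (0 < INR n) by (apply lt_0_INR; lia).
  assert (Hs : st n (S kz) <= st n n) by (apply st_le_compat; lia).
  rewrite st_S, st_n in Hs by auto.
  replace (2 / INR n) with (2 * (1 / INR n)) in Hs by (field; lra).
  assert (0 < 1 / INR n) by (apply Rdiv_lt_0_compat; lra).
  unfold Rabs in *. repeat destruct (Rcase_abs _); lra.
Qed.

End Nearest.

Section Drift.

Variables (beta : R) (n k : nat).
Hypotheses (Hn : (1 <= n)%nat) (Hk : (k <= n)%nat) (Hb : 0 < beta).
Hypothesis Hpos : 1 / INR n <= st n k.

Lemma drift_lower : (st n k - tanh (beta * st n k)) / 2 <= pdown beta n k - pup beta n k.
Proof.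
  unfold pdown, pup. cbv zeta. destruct (st_range n k Hn Hk).
  set (x := st n k) in *.
  assert (0 < INR n) by (apply lt_0_INR; lia).
  replace (beta * (x + 1 / INR n)) with (beta * x + beta / INR n) by (field; lra).
  replace (beta * (x - 1 / INR n)) with (beta * x - beta / INR n) by (field; lra).
  assert (0 < 1 / INR n) by (apply Rdiv_lt_0_compat; lra).
  assert (0 < beta / INR n) by (apply Rdiv_lt_0_compat; lra).
  pose proof (tanh_midpoint_le (beta * x) (beta / INR n) ltac:(apply Rmult_le_pos; lra)).
  pose proof (tanh_le_compat (beta * x - beta / INR n) (beta * x + beta / INR n) ltac:(lra)).
  set (Tp := tanh (beta * x + beta / INR n)) in *. set (Tm := tanh (beta * x - beta / INR n)) in *.
  assert (0 <= x * (Tp - Tm)) by (apply Rmult_le_pos; lra).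
  nra.
Qed.

Lemma pdown_lower : exp (-2 * (beta * st n k)) / 4 <= pdown beta n k.
Proof.
  unfold pdown. cbv zeta. destruct (st_range n k Hn Hk).
  assert (0 < 1 / INR n) by (apply Rdiv_lt_0_compat; [lra|apply lt_0_INR; lia]).
  pose proof (exp_m2_le_1_minus_tanh (beta * st n k) ltac:(apply Rmult_le_pos; lra)).
  pose proof (tanh_le_compat (beta * (st n k - 1 / INR n)) (beta * st n k) ltac:(nra)).
  pose proof (exp_pos (-2 * (beta * st n k))).
  pose proof (tanh_bounds (beta * (st n k - 1 / INR n))).
  nra.
Qed.

End Drift.

(** * A logarithmic potential *)

(* [ln (y / (y + m))] is a primitive of [m / (y (y + m))]: the natural potential for a drift
   of the form [y (y + m)]. *)
Definition log_potential m y := ln y - ln (y + m).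

Lemma log_potential_le_compat m y1 y2 : 0 < m -> 0 < y1 -> y1 <= y2 ->
  log_potential m y1 <= log_potential m y2.
Proof.
  intros Hm H1 H2. unfold log_potential.
  rewrite <- !ln_div by lra. apply ln_le; [apply Rdiv_lt_0_compat; lra|].
  apply Rmult_le_reg_r with ((y1 + m) * (y2 + m)); [nra|].
  replace (y1 / (y1 + m) * ((y1 + m) * (y2 + m))) with (y1 * (y2 + m)) by (field; lra).
  replace (y2 / (y2 + m) * ((y1 + m) * (y2 + m))) with (y2 * (y1 + m)) by (field; lra).
  nra.
Qed.

Lemma log_potential_nonpos m y : 0 < m -> 0 < y -> log_potential m y <= 0.
Proof. intros. unfold log_potential. pose proof (ln_le y (y + m) ltac:(lra) ltac:(lra)). lra. Qed.

Lemma ln_plus_sub w h : 0 < w -> 0 < w + h -> ln (w + h) - ln w = ln (1 + h / w).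
Proof.
  intros Hw Hwh. rewrite <- ln_div by lra. f_equal. field. lra.
Qed.

Lemma log_potential_lower m y : 0 < m -> 0 < y -> - (m / y) <= log_potential m y.
Proof.
  intros Hm Hy. unfold log_potential.
  pose proof (ln_plus_sub y m Hy ltac:(lra)).
  pose proof (ln_1_plus_le (m / y) ltac:(pose proof (Rdiv_lt_0_compat m y Hm Hy); lra)).
  lra.
Qed.

Lemma log_potential_step m w h : 0 < m -> 0 < w -> 0 < w + h ->
  log_potential m (w + h) - log_potential m w = ln (1 + h / w) - ln (1 + h / (w + m)).
Proof.
  intros Hm Hw Hwh. unfold log_potential.
  rewrite <- ln_plus_sub, <- (ln_plus_sub (w + m) h) by lra.
  replace (w + m + h) with (w + h + m) by ring. ring.
Qed.

Section PotentialStep.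

Variables (p q h m w : R).
Hypotheses (Hh : 0 < h) (Hm : h / 2 <= m) (Hw : 3 * h / 2 <= w).
Hypotheses (Hp : 0 <= p) (Hq : 0 <= q).

(* [p] and [q] are the probabilities of the steps [+h] and [-h]. *)
Definition potential_increment :=
  p * (log_potential m (w + h) - log_potential m w)
  + q * (log_potential m (w - h) - log_potential m w).

Lemma potential_increment_le :
  let y1 := h / w in let y2 := h / (w + m) in
  potential_increment <= - (q - p) * (y1 - y2) + p * y2 ^ 2 / 2 + q * y2 ^ 2 - q * y1 ^ 2 / 2.
Proof.
  intros y1 y2.
  assert (Hy1 : 0 < y1 <= 2 / 3).
  { unfold y1. split; [apply Rdiv_lt_0_compat; lra|].
    apply Rmult_le_reg_r with w; [lra|]. unfold Rdiv. rewrite Rmult_assoc, Rinv_l; lra. }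
  assert (Hy2 : 0 < y2 <= 1 / 2).
  { unfold y2. split; [apply Rdiv_lt_0_compat; lra|].
    apply Rmult_le_reg_r with (w + m); [lra|]. unfold Rdiv. rewrite Rmult_assoc, Rinv_l; lra. }
  assert (Hy12 : y2 <= y1)
    by (unfold y1, y2; apply Rmult_le_compat_l; [lra|apply Rinv_le_contravar; lra]).
  unfold potential_increment. replace (w - h) with (w + - h) by ring.
  rewrite !log_potential_step by lra.
  replace (- h / w) with (- y1) by (unfold y1; field; lra).
  replace (- h / (w + m)) with (- y2) by (unfold y2; field; lra).
  fold y1 y2.
  pose proof (ln_1_plus_le y1 ltac:(lra)). pose proof (ln_1_plus_ge y2 ltac:(lra)).
  pose proof (ln_1_minus_le y1 ltac:(lra)). pose proof (ln_1_minus_ge y2 ltac:(lra)).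
  assert (p * (ln (1 + y1) - ln (1 + y2)) <= p * (y1 - (y2 - y2 ^ 2 / 2)))
    by (apply Rmult_le_compat_l; lra).
  assert (q * (ln (1 + - y1) - ln (1 + - y2)) <= q * ((- y1 - y1 ^ 2 / 2) - (- y2 - y2 ^ 2)))
    by (apply Rmult_le_compat_l; unfold Rminus in *; lra).
  lra.
Qed.

Lemma potential_increment_near : w <= m -> p <= q ->
  potential_increment <= - q * (h / w) ^ 2 / 8.
Proof.
  intros Hwm Hpq. pose proof potential_increment_le as H. cbv zeta in H.
  assert (Hy2 : 0 < h / (w + m) <= (h / w) / 2).
  { split; [apply Rdiv_lt_0_compat; lra|].
    apply Rmult_le_reg_r with (2 * w * (w + m)); [nra|].
    replace (h / (w + m) * (2 * w * (w + m))) with (2 * h * w) by (field; lra).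
    replace (h / w / 2 * (2 * w * (w + m))) with (h * (w + m)) by (field; lra). nra. }
  set (y1 := h / w) in *. set (y2 := h / (w + m)) in *.
  assert (0 <= (q - p) * (y1 - y2)) by (apply Rmult_le_pos; lra).
  assert (y2 ^ 2 <= y1 ^ 2 / 4) by nra.
  nra.
Qed.

Lemma potential_increment_far a : 0 < a -> p + q <= 1 ->
  a * w * (w + m) / 36 <= q - p -> h <= a * m ^ 3 / 36 ->
  potential_increment <= - (a * m) * h / 72.
Proof.
  intros Ha Hpq Hdrift Hh3. pose proof potential_increment_le as H. cbv zeta in H.
  assert (Hdiff : h / w - h / (w + m) = h * m / (w * (w + m))) by (field; lra).
  assert (Hfirst : a * m * h / 36 <= (q - p) * (h / w - h / (w + m))).
  { rewrite Hdiff.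
    apply Rle_trans with (a * w * (w + m) / 36 * (h * m / (w * (w + m)))).
    - right. field. lra.
    - apply Rmult_le_compat_r; [apply Rdiv_le_0_compat; nra|lra]. }
  assert (Hy12 : h / (w + m) <= h / w)
    by (apply Rmult_le_compat_l; [lra|apply Rinv_le_contravar; lra]).
  assert (Hy2m : h / (w + m) <= h / m)
    by (apply Rmult_le_compat_l; [lra|apply Rinv_le_contravar; lra]).
  assert (Hy2 : 0 <= h / (w + m)) by (apply Rdiv_le_0_compat; lra).
  assert (Hsq : (h / m) ^ 2 <= a * m * h / 36).
  { replace ((h / m) ^ 2) with (h * h / m ^ 2) by (field; lra).
    apply Rmult_le_reg_r with (m ^ 2); [apply pow_lt; lra|].
    replace (h * h / m ^ 2 * m ^ 2) with (h * h) by (field; lra).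
    replace (a * m * h / 36 * m ^ 2) with (h * (a * m ^ 3 / 36)) by field.
    apply Rmult_le_compat_l; lra. }
  set (y1 := h / w) in *. set (y2 := h / (w + m)) in *.
  assert (q * y2 ^ 2 <= q * y1 ^ 2) by (apply Rmult_le_compat_l; nra).
  assert (y2 ^ 2 <= (h / m) ^ 2) by nra.
  nra.
Qed.

End PotentialStep.

(** * Hitting the state nearest to the fixed point *)

Section Hitting.

Variables (delta : R) (n kz : nat) (z : R).
Hypotheses (Hn : (1 <= n)%nat) (Hdelta : 0 < delta) (Hz : 0 < z < 1).
Hypothesis Hfix : tanh ((1 + delta) * z) = z.
Hypotheses (Hkz : (kz <= n)%nat) (Hnear : nearest_state n kz z).

Let a := (1 + delta) * z.
Let kappa := 1 - (1 + delta) * (1 - z ^ 2).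

Lemma kappa_bounds : 2 * z ^ 2 / 3 <= kappa <= z ^ 2.
Proof. apply (fixed_point_slope_bounds (1 + delta) z Hz Hfix). lra. Qed.

Lemma drift_above_nearest k : (kz < k <= n)%nat ->
  (st n k - z) * (kappa + a * (st n k - z)) / 4 <= pdown (1 + delta) n k - pup (1 + delta) n k.
Proof.
  intros Hk. pose proof (nearest_state_above n kz z Hn Hnear k Hk) as Hu.
  destruct (st_range n k Hn ltac:(lia)) as [_ Hst].
  assert (0 < 1 / INR n) by (apply Rdiv_lt_0_compat; [lra|apply lt_0_INR; lia]).
  pose proof (drift_lower (1 + delta) n k Hn ltac:(lia) ltac:(lra) ltac:(lra)) as Hdrift.
  pose proof (drift_above_fixed_point (1 + delta) z Hz Hfix (st n k - z) ltac:(lra)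
                ltac:(lra) ltac:(lra)) as Hf.
  replace (z + (st n k - z)) with (st n k) in Hf by ring.
  unfold kappa, a. lra.
Qed.

Lemma step_mean_sub (V : nat -> R) k :
  step_mean (1 + delta) n V k - V k
  = pup (1 + delta) n k * (V (S k) - V k) + pdown (1 + delta) n k * (V (pred k) - V k).
Proof. unfold step_mean, pstay. ring. Qed.

(* A linear potential shows that [E_1 tau] is finite, but is far too crude to bound it. *)
Lemma ex_series_surv : ex_series (surv (1 + delta) n kz) /\ 0 <= Etau (1 + delta) n kz.
Proof.
  destruct kappa_bounds as [Hkap1 _]. assert (Hkap : 0 < kappa) by nra.
  assert (HnR : 0 < INR n) by (apply lt_0_INR; lia).
  set (A := 4 * INR n / kappa).
  destruct (Etau_le_lyapunov (1 + delta) n kz Hn (fun k => A * (INR k - INR kz)) Hkz)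
    as [Hs [H0 _]]; [| |split; assumption].
  - intros k Hk. apply Rmult_le_pos; [unfold A; apply Rdiv_le_0_compat; lra|].
    pose proof (le_INR kz k ltac:(lia)). lra.
  - intros k Hk. enough (Hneg : step_mean (1 + delta) n (fun k => A * (INR k - INR kz)) k
                             - A * (INR k - INR kz) <= -1) by lra.
    rewrite step_mean_sub.
    replace (INR (pred k)) with (INR k - 1) by (destruct k; [lia|simpl pred; rewrite S_INR; ring]).
    rewrite S_INR.
    pose proof (drift_above_nearest k Hk) as Hd.
    pose proof (nearest_state_above n kz z Hn Hnear k Hk).
    set (u := st n k - z) in *.
    assert (0 < 1 / INR n) by (apply Rdiv_lt_0_compat; lra).
    assert (kappa / INR n <= u * (kappa + a * u)).
    { assert (0 <= a * u) by (unfold a; apply Rmult_le_pos; nra).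
      assert (kappa * (1 / INR n) <= kappa * u) by (apply Rmult_le_compat_l; lra).
      unfold Rdiv in *. nra. }
    assert (A * (kappa / INR n) = 4) by (unfold A; field; lra).
    assert (0 < A) by (unfold A; apply Rdiv_lt_0_compat; lra).
    nra.
Qed.

Section Potential.

Hypothesis Hkz_lt : (kz < n)%nat.

Let h := 2 / INR n.
Let m := kappa / a.
Let q0 := exp (-2 * a - 1) / 4.
(* [c1] is the scale of the fluctuations of the chain around the fixed point. *)
Let c1 := sqrt (q0 / (INR n * kappa)).
Let c := Rmax h c1.
Let w k := st n k - z + c.
Let V k := 72 / (kappa * h) * (log_potential m (w k) - log_potential m (w kz)).

Hypothesis Hregime : 72 * a ^ 2 <= INR n * kappa ^ 3.

Lemma potential_parameters :
  0 < h /\ 0 < a /\ 0 < kappa /\ 0 < q0 <= 1 / 4 /\ c1 ^ 2 = q0 / (INR n * kappa) /\ 0 < c1.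
Proof.
  destruct kappa_bounds as [Hk1 _].
  assert (HnR : 0 < INR n) by (apply lt_0_INR; lia).
  assert (Hkap : 0 < kappa) by nra.
  assert (0 < q0 / (INR n * kappa))
    by (apply Rdiv_lt_0_compat; [apply Rdiv_lt_0_compat; [apply exp_pos|lra]|nra]).
  split; [unfold h; apply Rdiv_lt_0_compat; lra|].
  split; [unfold a; nra|]. split; [lra|]. split; [|split].
  - unfold q0. split; [apply Rdiv_lt_0_compat; [apply exp_pos|lra]|].
    assert (exp (-2 * a - 1) <= exp 0) by (apply exp_le_compat; unfold a; nra).
    rewrite exp_0 in *. lra.
  - unfold c1. rewrite <- Rsqr_pow2. apply Rsqr_sqrt. lra.
  - unfold c1. apply sqrt_lt_R0. lra.
Qed.

Lemma regime_consequences : 3 * h / 2 <= m /\ h <= a * m ^ 3 / 36 /\ c1 <= 2 * m / 3.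
Proof.
  destruct potential_parameters as (Hh & Ha & Hkap & Hq0 & Hc1sq & Hc1).
  destruct kappa_bounds as [_ Hk2].
  assert (HnR : 0 < INR n) by (apply lt_0_INR; lia).
  assert (Hza : z <= a) by (unfold a; nra).
  assert (Hka : kappa <= a) by nra.
  split; [|split].
  - assert (Hna : 3 * a <= INR n * kappa).
    { apply Rmult_le_reg_l with (kappa ^ 2); [nra|].
      assert (z ^ 2 < 1) by nra.
      assert (kappa ^ 2 <= kappa) by nra.
      assert (kappa ^ 2 * (3 * a) <= 3 * a ^ 2) by nra. nra. }
    unfold h, m. apply Rmult_le_reg_r with (INR n * a); [nra|].
    replace (3 * (2 / INR n) / 2 * (INR n * a)) with (3 * a) by (field; lra).
    replace (kappa / a * (INR n * a)) with (INR n * kappa) by (field; lra). lra.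
  - unfold h, m. apply Rmult_le_reg_r with (36 * INR n * a ^ 2);
    [apply Rmult_lt_0_compat; [lra|apply pow_lt; lra]|].
    replace (2 / INR n * (36 * INR n * a ^ 2)) with (72 * a ^ 2) by (field; lra).
    replace (a * (kappa / a) ^ 3 / 36 * (36 * INR n * a ^ 2)) with (INR n * kappa ^ 3) by (field; lra).
    lra.
  - assert (c1 ^ 2 <= (2 * m / 3) ^ 2); [|unfold m in *; assert (0 <= 2 * (kappa / a) / 3) by
      (apply Rdiv_le_0_compat; [apply Rmult_le_pos, Rlt_le, Rdiv_lt_0_compat|]; lra); nra].
    rewrite Hc1sq. unfold m. apply Rmult_le_reg_r with (9 * INR n * kappa * a ^ 2);
      [apply Rmult_lt_0_compat; [apply Rmult_lt_0_compat; lra|apply pow_lt; lra]|].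
    replace (q0 / (INR n * kappa) * (9 * INR n * kappa * a ^ 2)) with (9 * q0 * a ^ 2) by (field; lra).
    replace ((2 * (kappa / a) / 3) ^ 2 * (9 * INR n * kappa * a ^ 2)) with (4 * (INR n * kappa ^ 3))
      by (field; lra).
    nra.
Qed.

Lemma w_succ k : w (S k) = w k + h.
Proof. unfold w, h. rewrite st_S by auto. ring. Qed.

Lemma w_pred k : (1 <= k)%nat -> w (pred k) = w k - h.
Proof. intros Hk. destruct k as [|k]; [lia|]. simpl pred. rewrite w_succ. ring. Qed.

Lemma transition_facts k : (kz < k <= n)%nat ->
  h / 2 <= st n k - z /\ 0 <= pup (1 + delta) n k <= pdown (1 + delta) n k /\
  pup (1 + delta) n k + pdown (1 + delta) n k <= 1.
Proof.
  intros Hk. destruct potential_parameters as (Hh & Ha & Hkap & _).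
  pose proof (drift_above_nearest k Hk) as Hdrift.
  pose proof (nearest_state_above n kz z Hn Hnear k Hk) as Hu.
  replace (1 / INR n) with (h / 2) in Hu by (unfold h; field; apply not_0_INR; lia).
  destruct (transition_probs_nonneg (1 + delta) n k Hn ltac:(lia)) as (Hp & Hq & Hs).
  unfold pstay in Hs.
  assert (0 <= (st n k - z) * (kappa + a * (st n k - z)) / 4)
    by (apply Rdiv_le_0_compat; [apply Rmult_le_pos; nra|lra]).
  repeat split; lra.
Qed.

Lemma q0_le_pdown k : (kz < k <= n)%nat -> st n k - z <= c1 / 2 -> q0 <= pdown (1 + delta) n k.
Proof.
  intros Hk Hu.
  destruct potential_parameters as (Hh & Ha & Hkap & Hq0 & Hc1sq & Hc1).
  destruct regime_consequences as (_ & _ & Hc1m).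
  destruct kappa_bounds as [_ Hk2].
  pose proof (nearest_state_above n kz z Hn Hnear k Hk).
  assert (0 < 1 / INR n) by (apply Rdiv_lt_0_compat; [lra|apply lt_0_INR; lia]).
  eapply Rle_trans; [|apply (pdown_lower (1 + delta) n k Hn ltac:(lia) ltac:(lra) ltac:(lra))].
  unfold q0. apply Rmult_le_compat_r; [lra|]. apply exp_le_compat.
  assert (Hbc : (1 + delta) * c1 <= 1).
  { assert ((1 + delta) * c1 <= (1 + delta) * (2 * m / 3)) by (apply Rmult_le_compat_l; lra).
    assert ((1 + delta) * (2 * m / 3) = 2 * kappa / (3 * z)) by (unfold m, a; field; lra).
    assert (2 * kappa / (3 * z) <= 1); [|lra].
    apply Rmult_le_reg_r with (3 * z); [lra|].
    replace (2 * kappa / (3 * z) * (3 * z)) with (2 * kappa) by (field; lra). nra. }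
  assert ((1 + delta) * (st n k - z) <= (1 + delta) * (c1 / 2)) by (apply Rmult_le_compat_l; lra).
  unfold a. nra.
Qed.

(* Near the target, the variance of the steps does the work: [q (h / w)^2] dominates. *)
Lemma potential_increment_near_target k : (kz < k <= n)%nat -> st n k - z < c / 2 ->
  potential_increment (pup (1 + delta) n k) (pdown (1 + delta) n k) h m (w k) <= - kappa * h / 72.
Proof.
  intros Hk Hu.
  destruct potential_parameters as (Hh & Ha & Hkap & Hq0 & Hc1sq & Hc1).
  destruct regime_consequences as (Hhm & _ & Hc1m).
  destruct (transition_facts k Hk) as (Hu2 & Hpq & _).
  assert (HnR : 0 < INR n) by (apply lt_0_INR; lia).
  assert (Hc : c = c1) by (unfold c, Rmax in *; destruct (Rle_dec h c1); lra).
  assert (Hq0q := q0_le_pdown k Hk ltac:(lra)).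
  assert (Hwk : w k = (st n k - z) + c1) by (rewrite <- Hc; reflexivity).
  set (q := pdown (1 + delta) n k) in *.
  eapply Rle_trans; [apply potential_increment_near; lra|].
  assert (Hw2 : kappa * w k ^ 2 <= 9 * q * h).
  { assert (0 <= w k <= 3 * c1 / 2) by lra.
    assert (w k ^ 2 <= 9 / 4 * c1 ^ 2) by nra.
    rewrite Hc1sq in *. unfold h.
    apply Rle_trans with (kappa * (9 / 4 * (q0 / (INR n * kappa))));
      [apply Rmult_le_compat_l; lra|].
    replace (kappa * (9 / 4 * (q0 / (INR n * kappa)))) with (9 / 4 * q0 / INR n) by (field; lra).
    assert (0 < / INR n) by (apply Rinv_0_lt_compat; lra).
    unfold Rdiv. nra. }
  assert (Hpos : 0 <= h / (72 * w k ^ 2))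
    by (apply Rdiv_le_0_compat; [lra|apply Rmult_lt_0_compat; [lra|apply pow_lt; lra]]).
  enough (kappa * h / 72 <= q * (h / w k) ^ 2 / 8) by lra.
  replace (q * (h / w k) ^ 2 / 8) with (h / (72 * w k ^ 2) * (9 * q * h)) by (field; lra).
  replace (kappa * h / 72) with (h / (72 * w k ^ 2) * (kappa * w k ^ 2)) by (field; lra).
  pose proof (Rmult_le_compat_l _ _ _ Hpos Hw2). lra.
Qed.

Lemma potential_increment_far_from_target k : (kz < k <= n)%nat -> c / 2 <= st n k - z ->
  potential_increment (pup (1 + delta) n k) (pdown (1 + delta) n k) h m (w k) <= - kappa * h / 72.
Proof.
  intros Hk Hu.
  destruct potential_parameters as (Hh & Ha & Hkap & _).
  destruct regime_consequences as (Hhm & Hh3 & _).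
  destruct (transition_facts k Hk) as (Hu2 & Hpq & Hpq1).
  pose proof (drift_above_nearest k Hk) as Hdrift.
  assert (Hch : h <= c) by apply Rmax_l.
  assert (Hkm : kappa = a * m) by (unfold m; field; lra).
  assert (Hwk : w k = (st n k - z) + c) by reflexivity.
  set (u := st n k - z) in *.
  rewrite Hkm. apply potential_increment_far; try lra.
  apply Rle_trans with (u * (kappa + a * u) / 4); [|lra].
  rewrite Hwk, Hkm.
  assert ((u + c) * (u + c + m) <= (3 * u) * (3 * (u + m))) by (apply Rmult_le_compat; lra).
  assert (a * ((u + c) * (u + c + m)) <= a * ((3 * u) * (3 * (u + m))))
    by (apply Rmult_le_compat_l; lra).
  lra.
Qed.

Lemma potential_increment_at k : (kz < k <= n)%nat ->
  potential_increment (pup (1 + delta) n k) (pdown (1 + delta) n k) h m (w k) <= - kappa * h / 72.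
Proof.
  intros Hk. destruct (Rlt_or_le (st n k - z) (c / 2)).
  - apply potential_increment_near_target; assumption.
  - apply potential_increment_far_from_target; assumption.
Qed.

Lemma w_nearest_lower : c / 2 <= w kz.
Proof.
  pose proof (nearest_state_below n kz z Hn Hnear Hkz_lt).
  assert (h <= c) by apply Rmax_l.
  assert (1 / INR n = h / 2) by (unfold h; field; apply not_0_INR; lia).
  unfold w. lra.
Qed.

Lemma w_le_compat j k : (j <= k)%nat -> w j <= w k.
Proof. intros. unfold w. pose proof (st_le_compat n j k Hn ltac:(lia)). lra. Qed.

Lemma V_superharmonic k : (kz < k <= n)%nat -> step_mean (1 + delta) n V k <= V k - 1.
Proof.
  intros Hk. destruct potential_parameters as (Hh & Ha & Hkap & _).
  enough (step_mean (1 + delta) n V k - V k <= -1) by lra.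
  rewrite step_mean_sub. unfold V.
  rewrite w_succ, w_pred by lia.
  pose proof (potential_increment_at k Hk) as Hinc. unfold potential_increment in Hinc.
  set (A := 72 / (kappa * h)).
  assert (HA : A * (kappa * h / 72) = 1) by (unfold A; field; lra).
  assert (HApos : 0 < A) by (unfold A; apply Rdiv_lt_0_compat; nra).
  pose proof (Rmult_le_compat_l _ _ _ (Rlt_le _ _ HApos) Hinc). nra.
Qed.

Lemma V_nonneg k : (kz <= k <= n)%nat -> 0 <= V k.
Proof.
  intros Hk. destruct potential_parameters as (Hh & Ha & Hkap & Hq0 & Hc1sq & Hc1).
  assert (c1 <= c) by apply Rmax_r. pose proof w_nearest_lower.
  assert (0 < m) by (unfold m; apply Rdiv_lt_0_compat; lra).
  apply Rmult_le_pos; [apply Rdiv_le_0_compat; nra|].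
  pose proof (log_potential_le_compat m (w kz) (w k) ltac:(lra) ltac:(lra)
                (w_le_compat kz k ltac:(lia))).
  lra.
Qed.

Theorem Etau_le_fluctuation_scale : Etau (1 + delta) n kz <= 72 * INR n / (a * c1).
Proof.
  destruct potential_parameters as (Hh & Ha & Hkap & Hq0 & Hc1sq & Hc1).
  assert (HnR : 0 < INR n) by (apply lt_0_INR; lia).
  assert (c1 <= c) by apply Rmax_r. pose proof w_nearest_lower.
  assert (0 < m) by (unfold m; apply Rdiv_lt_0_compat; lra).
  destruct (Etau_le_lyapunov (1 + delta) n kz Hn V Hkz V_nonneg V_superharmonic) as [_ [_ HV]].
  eapply Rle_trans; [exact HV|]. unfold V.
  pose proof (log_potential_nonpos m (w n) ltac:(lra) ltac:(pose proof (w_le_compat kz n Hkz); lra)).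
  pose proof (log_potential_lower m (w kz) ltac:(lra) ltac:(lra)).
  assert (m / w kz <= 2 * m / c1).
  { apply Rmult_le_reg_r with (w kz * c1); [nra|].
    replace (m / w kz * (w kz * c1)) with (m * c1) by (field; lra).
    replace (2 * m / c1 * (w kz * c1)) with (2 * m * w kz) by (field; lra). nra. }
  replace (72 * INR n / (a * c1)) with (72 / (kappa * h) * (2 * m / c1))
    by (unfold m, h; field; repeat split; lra).
  apply Rmult_le_compat_l; [apply Rdiv_le_0_compat; nra|lra].
Qed.

End Potential.

End Hitting.

(** * Comparison with [t_exp] *)

Lemma log_ratio_gfun beta x : -1 < x < 1 ->
  ln ((1 + gfun beta x) / (1 - gfun beta x)) = 2 * beta * x - ln (1 + x) + ln (1 - x).
Proof.
  intros Hx. unfold gfun. pose proof (tanh_bounds (beta * x)) as HT.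
  pose proof (tanh_ratio (beta * x)) as Hr.
  set (T := tanh (beta * x)) in *.
  assert (Hd : 0 < 1 - x * T) by nra.
  replace ((1 + (T - x) / (1 - x * T)) / (1 - (T - x) / (1 - x * T)))
    with (exp (2 * (beta * x)) * ((1 - x) / (1 + x)))
    by (rewrite <- Hr; field; repeat split; try lra; intro; nra).
  rewrite ln_mult, ln_exp, ln_div by (try apply Rdiv_lt_0_compat; try apply exp_pos; lra).
  ring.
Qed.

Lemma RInt_log_ratio_gfun beta z : 0 < z < 1 ->
  RInt (fun x => ln ((1 + gfun beta x) / (1 - gfun beta x))) 0 z
  = beta * z ^ 2 - (1 + z) * ln (1 + z) - (1 - z) * ln (1 - z).
Proof.
  intros Hz.
  rewrite (RInt_ext _ (fun x => 2 * beta * x - ln (1 + x) + ln (1 - x)))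
    by (intros x Hx; rewrite Rmin_left, Rmax_right in Hx by lra; apply log_ratio_gfun; lra).
  apply is_RInt_unique.
  set (F := fun x => beta * x ^ 2 - (1 + x) * ln (1 + x) - (1 - x) * ln (1 - x)).
  replace (beta * z ^ 2 - (1 + z) * ln (1 + z) - (1 - z) * ln (1 - z)) with (minus (F z) (F 0))
    by (unfold F, minus, plus, opp; simpl; rewrite Rplus_0_r, Rminus_0_r, ln_1; ring).
  apply (@is_RInt_derive R_CompleteNormedModule); intros x Hx;
    rewrite Rmin_left, Rmax_right in Hx by lra.
  - unfold F. auto_derive; [repeat split; lra|]. unfold Rminus. field. split; lra.
  - apply (@ex_derive_continuous R_AbsRing R_NormedModule). auto_derive. repeat split; lra.
Qed.

Lemma RInt_log_ratio_gfun_ge beta z : 0 < z < 1 -> tanh (beta * z) = z ->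
  z ^ 4 / 6 <= RInt (fun x => ln ((1 + gfun beta x) / (1 - gfun beta x))) 0 z.
Proof.
  intros Hz Hfix. rewrite RInt_log_ratio_gfun by auto.
  pose proof (fixed_point_ln beta z Hz Hfix).
  pose proof (quartic_le_ln_mix z ltac:(lra)).
  replace (beta * z ^ 2) with (z * (beta * z)) by ring.
  replace (beta * z) with ((ln (1 + z) - ln (1 - z)) / 2) by lra.
  replace (z * ((ln (1 + z) - ln (1 - z)) / 2) - (1 + z) * ln (1 + z) - (1 - z) * ln (1 - z))
    with (- (1 + z / 2) * ln (1 + z) - (1 - z / 2) * ln (1 - z)) by field.
  assumption.
Qed.

Section Asymptotics.

Variables (delta : R) (n kz : nat) (z : R).
Hypotheses (Hn : (1 <= n)%nat) (Hdelta : 0 < delta) (Hz : 0 < z < 1).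
Hypothesis Hfix : tanh ((1 + delta) * z) = z.
Hypotheses (Hnear : nearest_state n kz z) (Hkz : (kz < n)%nat).

(* [t_exp >= (n / delta) exp (X / 12)], and [X] tends to infinity with [delta ^ 2 n]. *)
Let X := INR n * z ^ 4.
Let a := (1 + delta) * z.
Let kappa := 1 - (1 + delta) * (1 - z ^ 2).

Lemma inv_1_minus_le : / (1 - z) <= 2 + 16 * X.
Proof.
  assert (HnR : 0 < INR n) by (apply lt_0_INR; lia).
  pose proof (nearest_state_1_minus n kz z Hn Hnear Hkz ltac:(lra)) as H1z.
  assert (0 <= X) by (unfold X; apply Rmult_le_pos; [lra|apply pow_le; lra]).
  destruct (Rle_or_lt z (1 / 2)).
  - assert (/ (1 - z) <= / (1 / 2)) by (apply Rinv_le_contravar; lra).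
    replace (/ (1 / 2)) with 2 in * by field. lra.
  - assert (/ (1 - z) <= / (1 / INR n))
      by (apply Rinv_le_contravar; [apply Rdiv_lt_0_compat|]; lra).
    replace (/ (1 / INR n)) with (INR n) in * by (field; lra).
    assert (1 / 4 <= z ^ 2) by nra.
    assert (1 / 16 <= z ^ 4) by (replace (z ^ 4) with ((z ^ 2) ^ 2) by ring; nra).
    assert (INR n * (1 / 16) <= X) by (apply Rmult_le_compat_l; lra). lra.
Qed.

Lemma regime_small_z : z <= 1 / 2 -> 300 <= X -> 72 * a ^ 2 <= INR n * kappa ^ 3.
Proof.
  intros Hsmall HX. destruct (kappa_bounds delta z Hdelta Hz Hfix) as [Hk1 _]. fold kappa in Hk1.
  pose proof (fixed_point_le (1 + delta) z Hz Hfix) as Ha. fold a in Ha.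
  assert (Hza : z <= a) by (unfold a; nra).
  assert (z ^ 3 / (3 * (1 - z ^ 2)) <= z / 9).
  { apply Rmult_le_reg_r with (9 * (1 - z ^ 2)); [nra|].
    replace (z ^ 3 / (3 * (1 - z ^ 2)) * (9 * (1 - z ^ 2))) with (3 * z ^ 3) by (field; nra).
    replace (z / 9 * (9 * (1 - z ^ 2))) with (z * (1 - z ^ 2)) by field. nra. }
  assert (Ha2 : a ^ 2 <= 100 / 81 * z ^ 2) by nra.
  assert (Hk3 : (2 * z ^ 2 / 3) ^ 3 <= kappa ^ 3) by (apply pow_incr; split; nra).
  assert (INR n * (2 * z ^ 2 / 3) ^ 3 <= INR n * kappa ^ 3)
    by (apply Rmult_le_compat_l; [apply pos_INR|lra]).
  assert (INR n * (2 * z ^ 2 / 3) ^ 3 = 8 / 27 * z ^ 2 * X) by (unfold X; field).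
  assert (8 / 27 * z ^ 2 * 300 <= 8 / 27 * z ^ 2 * X) by (apply Rmult_le_compat_l; nra).
  nra.
Qed.

(* For [z] close to 1, [a = atanh z] is only logarithmic in [n], since [1 - z >= 1 / n]. *)
Lemma regime_large_z : 1 / 2 < z -> 32 * 15552 ^ 2 <= X -> 72 * a ^ 2 <= INR n * kappa ^ 3.
Proof.
  intros Hlarge HX. destruct (kappa_bounds delta z Hdelta Hz Hfix) as [Hk1 _]. fold kappa in Hk1.
  assert (HnR : 0 < INR n) by (apply lt_0_INR; lia).
  assert (Ha : 0 <= a) by (unfold a; nra).
  assert (HnX : X <= INR n).
  { unfold X. replace (z ^ 4) with ((z ^ 2) ^ 2) by ring.
    assert (0 <= z ^ 2 <= 1) by (split; nra).
    assert (Hz4 : (z ^ 2) ^ 2 <= 1) by nra.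
    pose proof (Rmult_le_compat_l _ _ _ (Rlt_le _ _ HnR) Hz4). lra. }
  assert (Hexp : exp (2 * a) <= 2 * INR n).
  { unfold a. rewrite exp_2_fixed_point by auto.
    pose proof (nearest_state_1_minus n kz z Hn Hnear Hkz ltac:(lra)).
    apply Rmult_le_reg_r with (1 - z); [lra|].
    replace ((1 + z) / (1 - z) * (1 - z)) with (1 + z) by (field; lra).
    assert (1 <= INR n * (1 - z)).
    { apply Rmult_le_reg_r with (/ INR n); [apply Rinv_0_lt_compat; lra|].
      replace (INR n * (1 - z) * / INR n) with (1 - z) by (field; lra). unfold Rdiv in *. lra. }
    lra. }
  pose proof (pow_div_le_exp 3 (2 * a) ltac:(lra)) as H4.
  replace (INR 4) with 4 in H4 by (simpl; ring).
  assert (Ha4 : a ^ 4 <= 32 * INR n) by lra.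
  assert (H15 : 15552 * a ^ 2 <= INR n).
  { assert ((15552 * a ^ 2) ^ 2 <= INR n * INR n); [|nra].
    replace ((15552 * a ^ 2) ^ 2) with (15552 ^ 2 * a ^ 4) by ring.
    assert (15552 ^ 2 * a ^ 4 <= 15552 ^ 2 * (32 * INR n)) by (apply Rmult_le_compat_l; lra).
    assert (15552 ^ 2 * 32 * INR n <= INR n * INR n) by (apply Rmult_le_compat_r; lra).
    lra. }
  assert (Hk3 : (1 / 6) ^ 3 <= kappa ^ 3) by (apply pow_incr; split; nra).
  assert (INR n * (1 / 6) ^ 3 <= INR n * kappa ^ 3) by (apply Rmult_le_compat_l; lra).
  lra.
Qed.

Lemma regime_of_large_X : 32 * 15552 ^ 2 <= X -> 72 * a ^ 2 <= INR n * kappa ^ 3.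
Proof.
  intros HX. destruct (Rle_or_lt z (1 / 2)).
  - apply regime_small_z; lra.
  - apply regime_large_z; lra.
Qed.

Let q0 := exp (-2 * a - 1) / 4.
Let c1 := sqrt (q0 / (INR n * kappa)).
Let I := RInt (fun x => ln ((1 + gfun (1 + delta) x) / (1 - gfun (1 + delta) x))) 0 z.
Let E := exp (INR n / 2 * I).
Let K := 72 * delta / (a * c1 * E).

Lemma fluctuation_scale_facts :
  0 < a /\ 0 < kappa /\ 0 < q0 /\ c1 ^ 2 = q0 / (INR n * kappa) /\ 0 < c1.
Proof.
  destruct (kappa_bounds delta z Hdelta Hz Hfix) as [Hk1 _]. fold kappa in Hk1.
  assert (HnR : 0 < INR n) by (apply lt_0_INR; lia).
  assert (Hkap : 0 < kappa) by nra.
  assert (Hq0 : 0 < q0) by (unfold q0; apply Rdiv_lt_0_compat; [apply exp_pos|lra]).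
  assert (0 < q0 / (INR n * kappa)) by (apply Rdiv_lt_0_compat; nra).
  split; [unfold a; nra|]. split; [lra|]. split; [lra|]. split.
  - unfold c1. rewrite <- Rsqr_pow2. apply Rsqr_sqrt. lra.
  - unfold c1. apply sqrt_lt_R0. lra.
Qed.

Lemma Etau_texp_ratio_le_K : 32 * 15552 ^ 2 <= X ->
  0 <= Etau (1 + delta) n kz / texp delta n z <= K.
Proof.
  intros HX. destruct fluctuation_scale_facts as (Ha & Hkap & Hq0 & Hc1sq & Hc1).
  assert (HnR : 0 < INR n) by (apply lt_0_INR; lia).
  pose proof (Etau_le_fluctuation_scale delta n kz z Hn Hdelta Hz Hfix (Nat.lt_le_incl _ _ Hkz)
                Hnear Hkz (regime_of_large_X HX)) as Hmain.
  fold a kappa q0 c1 in Hmain.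
  destruct (ex_series_surv delta n kz z Hn Hdelta Hz Hfix (Nat.lt_le_incl _ _ Hkz) Hnear)
    as [_ Hnon].
  assert (HE : 0 < E) by apply exp_pos.
  change (texp delta n z) with (INR n / delta * E).
  split; [apply Rdiv_le_0_compat; [lra|apply Rmult_lt_0_compat; [apply Rdiv_lt_0_compat|]; lra]|].
  apply Rle_trans with (72 * INR n / (a * c1) / (INR n / delta * E)).
  - unfold Rdiv at 1 3. apply Rmult_le_compat_r; [|exact Hmain].
    apply Rlt_le, Rinv_0_lt_compat, Rmult_lt_0_compat; [apply Rdiv_lt_0_compat|]; lra.
  - right. unfold K. field. repeat split; lra.
Qed.

Lemma K_sq_eq :
  K ^ 2 = 5184 * (delta ^ 2 * INR n) * (kappa / a ^ 2) * / q0 * exp (- (INR n * I)).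
Proof.
  destruct fluctuation_scale_facts as (Ha & Hkap & Hq0 & Hc1sq & Hc1).
  assert (HnR : 0 < INR n) by (apply lt_0_INR; lia).
  assert (HE : 0 < E) by apply exp_pos.
  assert (HE2 : exp (- (INR n * I)) = / E ^ 2).
  { unfold E. rewrite exp_Ropp. f_equal. rewrite <- exp_mult_INR. f_equal. simpl. field. }
  rewrite HE2. unfold K.
  replace ((72 * delta / (a * c1 * E)) ^ 2) with (5184 * delta ^ 2 / (a ^ 2 * c1 ^ 2 * E ^ 2))
    by (field; repeat split; lra).
  rewrite Hc1sq. field. repeat split; lra.
Qed.

Lemma ratio_sq_factor_bounds :
  delta ^ 2 * INR n <= X * (/ (1 - z)) ^ 2 / 9 /\ kappa / a ^ 2 <= 1 /\
  / q0 <= 24 * / (1 - z) /\ exp (- (INR n * I)) <= exp (- (X / 6)).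
Proof.
  destruct (kappa_bounds delta z Hdelta Hz Hfix) as [Hk1 Hk2]. fold kappa in Hk1, Hk2.
  destruct (fixed_point_slope_bounds (1 + delta) z Hz Hfix ltac:(lra)) as [_ Hd].
  assert (HnR : 0 < INR n) by (apply lt_0_INR; lia).
  assert (Hza : z <= a) by (unfold a; nra).
  assert (H1z : 0 < / (1 - z)) by (apply Rinv_0_lt_compat; lra).
  split; [|split; [|split]].
  - replace (1 + delta - 1) with delta in Hd by ring.
    assert (Hdz : delta <= z ^ 2 / 3 * / (1 - z)).
    { eapply Rle_trans; [exact Hd|]. unfold Rdiv. rewrite Rinv_mult.
      rewrite <- Rmult_assoc. apply Rmult_le_compat_l; [nra|].
      apply Rinv_le_contravar; nra. }
    assert (delta ^ 2 <= (z ^ 2 / 3 * / (1 - z)) ^ 2) by (apply pow_incr; lra).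
    unfold X. replace (INR n * z ^ 4 * (/ (1 - z)) ^ 2 / 9)
      with ((z ^ 2 / 3 * / (1 - z)) ^ 2 * INR n) by (field; lra).
    apply Rmult_le_compat_r; lra.
  - apply Rmult_le_reg_r with (a ^ 2); [apply pow_lt; nra|].
    replace (kappa / a ^ 2 * a ^ 2) with kappa by (field; nra). nra.
  - assert (Hq0 : / q0 = 4 * exp (2 * a) * exp 1).
    { unfold q0. replace (-2 * a - 1) with (- (2 * a + 1)) by ring.
      rewrite exp_Ropp, exp_plus. field. split; apply Rgt_not_eq, exp_pos. }
    rewrite Hq0. unfold a. rewrite exp_2_fixed_point by auto.
    pose proof exp_le_3. pose proof (exp_pos 1).
    assert ((1 + z) / (1 - z) * exp 1 <= 2 * / (1 - z) * 3)
      by (unfold Rdiv; apply Rmult_le_compat; nra).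
    lra.
  - apply exp_le_compat. pose proof (RInt_log_ratio_gfun_ge (1 + delta) z Hz Hfix) as HI.
    fold I in HI. unfold X.
    assert (INR n * (z ^ 4 / 6) <= INR n * I) by (apply Rmult_le_compat_l; lra).
    lra.
Qed.

Lemma K_sq_le : K ^ 2 <= 13824 * X * (/ (1 - z)) ^ 3 * exp (- (X / 6)).
Proof.
  destruct fluctuation_scale_facts as (Ha & Hkap & Hq0 & _).
  destruct ratio_sq_factor_bounds as (F1 & F2 & F3 & F4).
  assert (0 <= kappa / a ^ 2) by (apply Rdiv_le_0_compat; [lra|apply pow_lt; lra]).
  assert (0 < / q0) by (apply Rinv_0_lt_compat; lra).
  pose proof (exp_pos (- (INR n * I))).
  assert (0 <= delta ^ 2 * INR n) by (apply Rmult_le_pos; [apply pow2_ge_0|apply pos_INR]).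
  replace (13824 * X * (/ (1 - z)) ^ 3 * exp (- (X / 6)))
    with (5184 * (X * (/ (1 - z)) ^ 2 / 9) * 1 * (24 * / (1 - z)) * exp (- (X / 6)))
    by (field; lra).
  rewrite K_sq_eq.
  set (f1 := delta ^ 2 * INR n) in *. set (f2 := kappa / a ^ 2) in *.
  set (f3 := / q0) in *. set (f4 := exp (- (INR n * I))) in *.
  clearbody f1 f2 f3 f4.
  do 3 (apply Rmult_le_compat; try (repeat apply Rmult_le_pos); try lra).
Qed.

Lemma Etau_texp_ratio_sq_le : 32 * 15552 ^ 2 <= X ->
  (Etau (1 + delta) n kz / texp delta n z) ^ 2 <= 13824 * X * (/ (1 - z)) ^ 3 * exp (- (X / 6)).
Proof.
  intros HX. pose proof (Etau_texp_ratio_le_K HX). pose proof K_sq_le.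
  assert ((Etau (1 + delta) n kz / texp delta n z) ^ 2 <= K ^ 2) by (apply pow_incr; lra).
  lra.
Qed.

(* With [/ (1 - z) <= 18 X] and [(X / 36) ^ 6 <= exp (X / 6)], the bound of
   [Etau_texp_ratio_sq_le] is at most [559872 ^ 3 / X ^ 2 <= (559872 * 749 / X) ^ 2]. *)
Lemma Etau_texp_ratio_le : 32 * 15552 ^ 2 <= X ->
  Etau (1 + delta) n kz / texp delta n z <= 559872 * 749 / X.
Proof.
  intros HX. pose proof (Etau_texp_ratio_sq_le HX) as Hsq.
  set (r := Etau (1 + delta) n kz / texp delta n z) in *.
  pose proof inv_1_minus_le as Hinv.
  assert (H1z : 0 < / (1 - z)) by (apply Rinv_0_lt_compat; lra).
  assert (Hexp : exp (- (X / 6)) <= (36 / X) ^ 6).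
  { rewrite exp_Ropp. pose proof (pow_div_le_exp 5 (X / 6) ltac:(lra)) as H6.
    replace (INR 6) with 6 in H6 by (simpl; ring).
    replace ((36 / X) ^ 6) with (/ ((X / 6 / 6) ^ 6)) by (field; lra).
    apply Rinv_le_contravar; [apply pow_lt; lra|exact H6]. }
  assert (Hr2 : r ^ 2 <= 13824 * X * (18 * X) ^ 3 * (36 / X) ^ 6).
  { eapply Rle_trans; [exact Hsq|].
    pose proof (exp_pos (- (X / 6))).
    apply Rmult_le_compat; [|lra| |exact Hexp].
    - apply Rmult_le_pos; [lra|apply pow_le; lra].
    - apply Rmult_le_compat_l; [lra|apply pow_incr; lra]. }
  replace (13824 * X * (18 * X) ^ 3 * (36 / X) ^ 6) with (559872 ^ 3 / X ^ 2) in Hr2 by (field; lra).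
  assert (HD : 559872 ^ 3 / X ^ 2 <= (559872 * 749 / X) ^ 2).
  { replace ((559872 * 749 / X) ^ 2) with (559872 ^ 2 * 749 ^ 2 / X ^ 2) by (field; lra).
    unfold Rdiv. apply Rmult_le_compat_r; [apply Rlt_le, Rinv_0_lt_compat, pow_lt; lra|lra]. }
  assert (0 <= 559872 * 749 / X) by (apply Rdiv_le_0_compat; lra).
  destruct (Rle_or_lt r (559872 * 749 / X)) as [|Hlt]; [assumption|nra].
Qed.

End Asymptotics.

Lemma Etau_start_at_target beta n : (1 <= n)%nat -> Etau beta n n <= 0.
Proof.
  intros Hn. apply (Etau_le_lyapunov beta n n Hn (fun _ => 0)); [lia|intros; lra|intros; lia].
Qed.

Lemma fixed_point_quartic_ge delta z : 0 < delta -> 0 < z < 1 ->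
  tanh ((1 + delta) * z) = z -> Rmin (delta ^ 2) 1 <= 2 * z ^ 4.
Proof.
  intros Hdelta Hz Hfix.
  destruct (fixed_point_slope_bounds (1 + delta) z Hz Hfix ltac:(lra)) as [_ Hd].
  replace (1 + delta - 1) with delta in Hd by ring.
  assert (Hz2 : 3 * delta <= z ^ 2 * (1 + 3 * delta)).
  { apply Rmult_le_compat_r with (r := 3 * (1 - z ^ 2)) in Hd; [|nra].
    replace (z ^ 2 / (3 * (1 - z ^ 2)) * (3 * (1 - z ^ 2))) with (z ^ 2) in Hd by (field; nra).
    nra. }
  replace (z ^ 4) with ((z ^ 2) ^ 2) by ring.
  unfold Rmin. destruct (Rle_dec (delta ^ 2) 1).
  - assert (delta <= 1) by nra. assert (3 * delta / 4 <= z ^ 2) by nra. nra.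
  - assert (1 < delta) by nra. assert (3 / 4 <= z ^ 2) by nra. nra.
Qed.

Lemma is_lim_seq_quartic_scale (delta z : nat -> R) :
  (forall n, 0 < delta n) -> (forall n, 0 < z n < 1) ->
  (forall n, tanh ((1 + delta n) * z n) = z n) ->
  is_lim_seq (fun n => delta n ^ 2 * INR n) p_infty ->
  is_lim_seq (fun n => INR n * z n ^ 4) p_infty.
Proof.
  intros Hdelta Hz Hfix Hlim. apply is_lim_seq_spec in Hlim. apply is_lim_seq_spec.
  intros M. destruct (Hlim (2 * M)) as [N1 HN1].
  pose proof is_lim_seq_INR as HI. apply is_lim_seq_spec in HI. destruct (HI (2 * M)) as [N2 HN2].
  exists (max N1 N2). intros n Hn.
  specialize (HN1 n ltac:(lia)). specialize (HN2 n ltac:(lia)).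
  pose proof (fixed_point_quartic_ge (delta n) (z n) (Hdelta n) (Hz n) (Hfix n)) as Hq.
  assert (HnR : 0 <= INR n) by apply pos_INR.
  pose proof (Rmult_le_compat_l _ _ _ HnR Hq).
  unfold Rmin in *. destruct (Rle_dec (delta n ^ 2) 1); nra.
Qed.

Lemma Etau_texp_ratio_bound delta n kz z : (1 <= n)%nat -> 0 < delta -> 0 < z < 1 ->
  tanh ((1 + delta) * z) = z -> (kz <= n)%nat -> nearest_state n kz z ->
  32 * 15552 ^ 2 <= INR n * z ^ 4 ->
  0 <= Etau (1 + delta) n kz / texp delta n z <= 559872 * 749 / (INR n * z ^ 4).
Proof.
  intros Hn Hdelta Hz Hfix Hle Hnear HX.
  destruct (ex_series_surv delta n kz z Hn Hdelta Hz Hfix Hle Hnear) as [_ Hnon].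
  assert (Htexp : 0 < texp delta n z).
  { apply Rmult_lt_0_compat; [|apply exp_pos].
    apply Rdiv_lt_0_compat; [apply lt_0_INR; lia|lra]. }
  split; [apply Rdiv_le_0_compat; lra|].
  destruct (Nat.eq_dec kz n) as [->|Hlt]; [|apply Etau_texp_ratio_le; auto; lia].
  pose proof (Etau_start_at_target (1 + delta) n Hn).
  replace (Etau (1 + delta) n n) with 0 by lra. unfold Rdiv at 1. rewrite Rmult_0_l.
  apply Rdiv_le_0_compat; lra.
Qed.

Theorem lemma6p4
  (delta : nat -> R)
  (zstar : nat -> R)   (* the unique positive root of g, for beta = 1 + delta n *)
  (kz : nat -> nat)    (* index of the state nearest to zstar n *)
  (Hdelta_pos : forall n, 0 < delta n)
  (Hdelta_lim : is_lim_seq (fun n => (delta n) ^ 2 * INR n) p_infty)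
  (Hroot : forall n, 0 < zstar n < 1 /\ gfun (1 + delta n) (zstar n) = 0)
  (Hkz : forall n, (kz n <= n)%nat /\
     forall j, (j <= n)%nat -> Rabs (st n (kz n) - zstar n) <= Rabs (st n j - zstar n)) :
  (forall n, (1 <= n)%nat -> ex_series (surv (1 + delta n) n (kz n))) /\
  is_lim_seq (fun n => Etau (1 + delta n) n (kz n) / texp (delta n) n (zstar n)) 0.
Proof.
  assert (Hz : forall n, 0 < zstar n < 1) by apply Hroot.
  assert (Hfix : forall n, tanh ((1 + delta n) * zstar n) = zstar n)
    by (intros n; destruct (Hroot n); apply gfun_root_tanh; auto).
  split.
  { intros n Hn. destruct (Hkz n) as [Hle Hnear].
    exact (proj1 (ex_series_surv _ _ _ _ Hn (Hdelta_pos n) (Hz n) (Hfix n) Hle Hnear)). }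
  pose proof (is_lim_seq_quartic_scale delta zstar Hdelta_pos Hz Hfix Hdelta_lim) as HX.
  apply is_lim_seq_le_le_loc with (fun _ => 0) (fun n => 559872 * 749 / (INR n * zstar n ^ 4)).
  - destruct (proj2 (is_lim_seq_spec _ _) HX (32 * 15552 ^ 2)) as [N HN].
    exists (max 1 N). intros n Hn. specialize (HN n ltac:(lia)). cbv beta in HN.
    destruct (Hkz n) as [Hle Hnear].
    apply Etau_texp_ratio_bound; auto; [lia|lra].
  - apply is_lim_seq_const.
  - replace (Finite 0) with (Rbar_mult (559872 * 749) (Rbar_inv p_infty))
      by (simpl; f_equal; ring).
    apply is_lim_seq_scal_l, is_lim_seq_inv; [exact HX|discriminate].
Qed.
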